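(* Let $X:=\{x_i\}_{i\in[n]}$ be any sequence in $\mathbb{R}^d$, let $k\ge 2$ and $s\ge k$ be integers, draw indices $\{i_j\}_{j\in[s]}$ uniformly from $[n]$ either independently with replacement, or without replacement (in which case $s\le n$), and put $Y:=\{x_{i_j}\}_{j\in[s]}$. Then \[\mathbb{E}\operatorname{SDP}(Y,k)\le \mathbb{E}\operatorname{IP}(Y,k)\le \operatorname{IP}(X,k).\]
   Context: For a tuple $Y=\{y_j\}_{j\in[m]}$ in $\mathbb{R}^d$ (repeated points allowed) and $m\ge k$: $\Pi(m,k)$ is the set of partitions of $[m]$ into $k$ nonempty sets; $c_S:=\frac1{|S|}\sum_{j\in S}y_j$; $\operatorname{IP}(Y,k):=\min_{\Gamma\in\Pi(m,k)}\frac1m\sum_{S\in\Gamma}\sum_{j\in S}\|y_j-c_S\|^2$ (the normalized $k$-means value). $D_Y\in\mathbb{R}^{m\times m}$ has entries $\|y_i-y_j\|^2$, and $\operatorname{SDP}(Y,k):=\min\{\frac1{2m}\operatorname{tr}(D_YZ): Z\in\mathbb{R}^{m\times m},\ Z\mathbf 1=\mathbf 1,\ \operatorname{tr}Z=k,\ Z\ge0\text{ entrywise},\ Z\succeq0\}$ (the normalized Peng–Wei relaxation value). *)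

From HB Require Import structures.
From mathcomp Require Import all_boot all_order all_algebra.
From mathcomp Require Import boolp classical_sets reals.
Set Implicit Arguments. Unset Strict Implicit. Unset Printing Implicit Defensive.
Import Order.TTheory GRing.Theory Num.Theory.
Local Open Scope ring_scope.

Section KMeans.
Variable R : realType.
Variable d : nat.

Definition sqnorm (v : 'rV[R]_d) : R := \sum_(i < d) (v 0 i) ^+ 2.

Definition centroid (m : nat) (Y : 'I_m -> 'rV[R]_d) (S : {set 'I_m}) : 'rV[R]_d :=
  (#|S|%:R)^-1 *: \sum_(j in S) Y j.

Definition kmeans_cost (m : nat) (Y : 'I_m -> 'rV[R]_d) (G : {set {set 'I_m}}) : R :=
  (m%:R)^-1 * \sum_(S in G) \sum_(j in S) sqnorm (Y j - centroid Y S).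

(* Pi(m,k): partitions of [m] into k nonempty blocks
   (mathcomp's [partition] already requires blocks to be nonempty) *)
Definition kpartitions (m k : nat) : set {set {set 'I_m}} :=
  fun G => finset.partition G [set: 'I_m]%SET /\ #|G| = k.

(* IP(Y,k): minimum (= infimum of this finite nonempty set when m >= k) *)
Definition IP (m : nat) (Y : 'I_m -> 'rV[R]_d) (k : nat) : R :=
  inf (fun v => exists G, @kpartitions m k G /\ v = kmeans_cost Y G).

Definition distmx (m : nat) (Y : 'I_m -> 'rV[R]_d) : 'M[R]_m :=
  \matrix_(i, j) sqnorm (Y i - Y j).

Definition psd (m : nat) (Z : 'M[R]_m) : Prop :=
  Z^T = Z /\ forall v : 'cV[R]_m, 0 <= (v^T *m Z *m v) 0 0.

Definition pw_feasible (m k : nat) (Z : 'M[R]_m) : Prop :=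
  [/\ Z *m (const_mx 1 : 'cV[R]_m) = const_mx 1, \tr Z = k%:R,
      (forall i j, 0 <= Z i j) & psd Z].

(* SDP(Y,k): minimum (written as infimum; the feasible set is compact and nonempty) *)
Definition SDP (m : nat) (Y : 'I_m -> 'rV[R]_d) (k : nat) : R :=
  inf (fun v => exists Z, @pw_feasible m k Z /\ v = (2 * m%:R)^-1 * \tr (distmx Y *m Z)).

Definition E_with (n s : nat) (F : {ffun 'I_s -> 'I_n} -> R) : R :=
  (#|{ffun 'I_s -> 'I_n}|%:R)^-1 * \sum_(f : {ffun 'I_s -> 'I_n}) F f.

(* Expectation over i_1..i_s drawn uniformly without replacement
   (uniform over injective index maps [s] -> [n]) *)
Definition E_without (n s : nat) (F : {ffun 'I_s -> 'I_n} -> R) : R :=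
  (#|[set f : {ffun 'I_s -> 'I_n} | injectiveb f]|%:R)^-1 *
  \sum_(f : {ffun 'I_s -> 'I_n} | injectiveb f) F f.

Definition subsample (n s : nat) (X : 'I_n -> 'rV[R]_d) (f : {ffun 'I_s -> 'I_n}) :
  'I_s -> 'rV[R]_d := fun j => X (f j).

End KMeans.

Arguments E_with {R} n s F.
Arguments E_without {R} n s F.

(* SDP(Y,k) <= IP(Y,k) pointwise: a k-partition of Y yields the feasible
   matrix Z = sum_S |S|^-1 1_S 1_S^T, whose objective is the k-means cost of the
   partition, because the squared distances within a block S add up to 2|S|
   times its within-block cost.
   For E IP(Y,k) <= IP(X,k), fix a k-partition of X and send every sampled
   point to the centroid of its block.  This uses at most k centers, and since
   k <= s it can be refined to a partition into exactly k clusters without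
   increasing the cost (isolating a point as its own center costs nothing).
   Both sampling schemes are invariant under shifting all indices modulo n, so
   every sampled index is uniform on [n] and the expected cost of this
   assignment equals the cost of the chosen partition of X. *)

From HB Require Import structures.
From mathcomp Require Import all_boot all_order all_algebra.
From mathcomp Require Import boolp classical_sets reals.
From mathcomp Require Import ring zify.
Import Order.TTheory GRing.Theory Num.Theory.
Local Open Scope ring_scope.
Set Implicit Arguments. Unset Strict Implicit. Unset Printing Implicit Defensive.

Section Huygens.
Variables (R : numFieldType) (I : finType) (P : pred I) (a : I -> R).

Let mu := (#|P|%:R)^-1 * \sum_(i | P i) a i.

Lemma sum_dev_mean : \sum_(j | P j) (a j - mu) = 0.
Proof.
rewrite sumrB sumr_const -mulr_natl mulrA.
have [P0|P_gt0] := posnP #|P|.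
  by rewrite P0 !mul0r subr0 big_pred0 // => j; exact: (card0_eq P0).
by rewrite divff ?mul1r ?subrr // pnatr_eq0 -lt0n.
Qed.

Lemma sum_sqr_dev c :
  \sum_(j | P j) (a j - c) ^+ 2 =
  \sum_(j | P j) (a j - mu) ^+ 2 + #|P|%:R * (mu - c) ^+ 2.
Proof.
rewrite (eq_bigr (fun j => (a j - mu) ^+ 2 + 2 * (mu - c) * (a j - mu) + (mu - c) ^+ 2));
  last by move=> j _; ring.
by rewrite !big_split /= -mulr_sumr sum_dev_mean mulr0 addr0 sumr_const mulr_natl.
Qed.

End Huygens.

Section Centroid.
Variables (R : realType) (d m : nat) (Y : 'I_m -> 'rV[R]_d).

Lemma sqnorm_ge0 (v : 'rV[R]_d) : 0 <= sqnorm v.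
Proof. by apply: sumr_ge0 => i _; apply: sqr_ge0. Qed.

Lemma sqnormN (v : 'rV[R]_d) : sqnorm (- v) = sqnorm v.
Proof. by apply: eq_bigr => i _; rewrite mxE sqrrN. Qed.

Lemma sqnormBC (u v : 'rV[R]_d) : sqnorm (u - v) = sqnorm (v - u).
Proof. by rewrite -sqnormN opprB. Qed.

Lemma sum_sqnorm_dev (S : {set 'I_m}) c :
  \sum_(j in S) sqnorm (Y j - c) =
  \sum_(j in S) sqnorm (Y j - centroid Y S) + #|S|%:R * sqnorm (centroid Y S - c).
Proof.
rewrite /sqnorm !(exchange_big _ _ _ (fun j => j \in S)) /= mulr_sumr -big_split /=.
apply: eq_bigr => i _; rewrite !mxE summxE.
under eq_bigr => j _ do rewrite !mxE.
under [X in _ = X + _]eq_bigr => j _ do rewrite !mxE summxE.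
exact: (sum_sqr_dev (mem S) (fun j => Y j 0 i)).
Qed.

Lemma centroid_min (S : {set 'I_m}) c :
  \sum_(j in S) sqnorm (Y j - centroid Y S) <= \sum_(j in S) sqnorm (Y j - c).
Proof. by rewrite (sum_sqnorm_dev S c) lerDl mulr_ge0 ?ler0n ?sqnorm_ge0. Qed.

Lemma sum_pair_sqnorm (S : {set 'I_m}) :
  \sum_(i in S) \sum_(j in S) sqnorm (Y i - Y j) =
  2 * #|S|%:R * \sum_(j in S) sqnorm (Y j - centroid Y S).
Proof.
under eq_bigr => i _ do under eq_bigr => j _ do rewrite sqnormBC.
under eq_bigr => i _ do rewrite sum_sqnorm_dev sqnormBC.
rewrite big_split /= -mulr_sumr sumr_const; ring.
Qed.

End Centroid.

Lemma partition_sum_mem {R : pzSemiRingType} (T : finType) (G : {set {set T}}) x :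
  finset.partition G [set: T] -> \sum_(S in G) (x \in S)%:R = 1 :> R.
Proof.
move=> partG; have [/eqP coverG tiG _] := and3P partG.
have xG : x \in finset.cover G by rewrite coverG inE.
rewrite (bigD1 (finset.pblock G x)) ?finset.pblock_mem //= finset.mem_pblock xG.
rewrite big1 ?addr0 // => S /andP[SG neqS]; case: (boolP (x \in S)) => // xS.
by rewrite (finset.def_pblock tiG SG xS) eqxx in neqS.
Qed.

Lemma partition_card_neq0 {R : numDomainType} (T : finType) (G : {set {set T}}) :
  finset.partition G [set: T] -> {in G, forall S : {set _}, #|S|%:R != 0 :> R}.
Proof.
case/and3P => _ _ G0 S SG; rewrite pnatr_eq0 cards_eq0.
by apply: contraNneq G0 => <-.
Qed.

Section IndicatorVector.
Variables (R : comPzSemiRingType) (m : nat).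

Definition indicator_cV (S : {set 'I_m}) : 'cV[R]_m := \col_i (i \in S)%:R.

Lemma mul_indicator_cV p (A : 'M[R]_(p, m)) S i :
  (A *m indicator_cV S) i 0 = \sum_(j in S) A i j.
Proof.
rewrite mxE [RHS]big_mkcond; apply: eq_bigr => j _.
by rewrite mxE; case: (j \in S); rewrite ?mulr1 ?mulr0.
Qed.

Lemma tr_indicator_cV_mul p (A : 'M[R]_(m, p)) S l :
  ((indicator_cV S)^T *m A) 0 l = \sum_(i in S) A i l.
Proof.
rewrite mxE [RHS]big_mkcond; apply: eq_bigr => i _.
by rewrite !mxE; case: (i \in S); rewrite ?mul1r ?mul0r.
Qed.

Lemma mxtrace_mul_indicator_outer (A : 'M[R]_m) S :
  \tr (A *m (indicator_cV S *m (indicator_cV S)^T)) = \sum_(i in S) \sum_(j in S) A i j.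
Proof.
rewrite mulmxA mxtrace_mulC trace_mx11 tr_indicator_cV_mul.
by apply: eq_bigr => i _; rewrite mul_indicator_cV.
Qed.

End IndicatorVector.

Section PengWeiMatrix.
Variables (R : realType) (m : nat).

Lemma psd_sum_outer (I : finType) (P : pred I) (w : I -> R) (u : I -> 'cV[R]_m) :
  (forall i, P i -> 0 <= w i) -> psd (\sum_(i | P i) w i *: (u i *m (u i)^T)).
Proof.
move=> w_ge0; split.
  rewrite linear_sum; apply: eq_bigr => i _.
  by rewrite linearZ /= trmx_mul trmxK.
move=> v; rewrite mulmx_sumr mulmx_suml summxE; apply: sumr_ge0 => i Pi.
have -> : v^T *m (w i *: (u i *m (u i)^T)) *m v
          = w i *: ((v^T *m u i) *m ((v^T *m u i)^T)).
  by rewrite -scalemxAr -scalemxAl trmx_mul trmxK !mulmxA.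
rewrite mxE mulr_ge0 ?w_ge0 // mxE big_ord1 [X in _ * X]mxE.
by rewrite -expr2 sqr_ge0.
Qed.

Definition partition_mx (G : {set {set 'I_m}}) : 'M[R]_m :=
  \sum_(S in G) #|S|%:R^-1 *: (indicator_cV R S *m (indicator_cV R S)^T).

Lemma outer_indicator_cV_mul_const (S : {set 'I_m}) : #|S|%:R != 0 :> R ->
  (#|S|%:R^-1 *: (indicator_cV R S *m (indicator_cV R S)^T)) *m const_mx 1 = indicator_cV R S.
Proof.
move=> S_neq0; apply/matrixP => i j; rewrite -scalemxAl -mulmxA !mxE big_ord1.
rewrite tr_indicator_cV_mul (eq_bigr (fun=> 1)) => [|l _]; last by rewrite mxE.
by rewrite sumr_const [_ * _%:R]mulrC mulKf // mxE.
Qed.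

Lemma partition_mx_feasible G : finset.partition G [set: 'I_m] ->
  pw_feasible #|G| (partition_mx G).
Proof.
move=> partG.
have S_neq0 : {in G, forall S : {set _}, #|S|%:R != 0 :> R} := partition_card_neq0 partG.
split.
- rewrite mulmx_suml (eq_bigr _ (fun S SG => outer_indicator_cV_mul_const (S_neq0 S SG))).
  apply/matrixP => i j; rewrite summxE !mxE.
  under eq_bigr => S _ do rewrite mxE.
  exact: partition_sum_mem.
- rewrite /partition_mx raddf_sum /= (eq_bigr (fun=> 1)) ?sumr_const // => S SG.
  rewrite mxtraceZ mxtrace_mulC trace_mx11 tr_indicator_cV_mul.
  rewrite (eq_bigr (fun=> 1)) => [|i iS]; last by rewrite mxE iS.
  by rewrite sumr_const mulVf ?S_neq0.
- move=> i j; rewrite summxE; apply: sumr_ge0 => S _.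
  rewrite mxE mulr_ge0 ?invr_ge0 ?ler0n // mxE.
  by apply: sumr_ge0 => l _; rewrite !mxE mulr_ge0 ?ler0n.
- by apply: psd_sum_outer => S _; rewrite invr_ge0 ler0n.
Qed.

Lemma partition_mx_objective d (Y : 'I_m -> 'rV[R]_d) G :
  finset.partition G [set: 'I_m] ->
  (2 * m%:R)^-1 * \tr (distmx Y *m partition_mx G) = kmeans_cost Y G.
Proof.
move=> partG.
have S_neq0 : {in G, forall S : {set _}, #|S|%:R != 0 :> R} := partition_card_neq0 partG.
rewrite mulmx_sumr raddf_sum /=.
rewrite (eq_bigr (fun S : {set _} => 2 * \sum_(j in S) sqnorm (Y j - centroid Y S))).
  by rewrite -mulr_sumr invfM -mulrA mulrCA mulKf ?pnatr_eq0.
move=> S SG; rewrite -scalemxAr mxtraceZ mxtrace_mul_indicator_outer.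
under eq_bigr => i _ do under eq_bigr => j _ do rewrite mxE.
by rewrite sum_pair_sqnorm (mulrC 2) -mulrA mulKf ?S_neq0.
Qed.

End PengWeiMatrix.

Lemma card_preim_partition (T rT : finType) (f : T -> rT) (D : {set T}) :
  #|finset.preim_partition f D| = #|f @: D|.
Proof.
pose fiber t := [set y in D | t == f y].
have -> : finset.preim_partition f D = fiber @: (f @: D) by rewrite -imset_comp.
apply: card_in_imset => _ _ /imsetP[x Dx ->] /imsetP[y Dy ->] /setP/(_ x).
by rewrite !inE Dx eqxx => /esym/eqP.
Qed.

Definition isolate (I : eqType) (T : Type) (a : I -> T) (i0 : I) (i : I) : option T :=
  if i == i0 then None else Some (a i).

Lemma card_imset_isolate (I T : finType) (a : I -> T) (i1 i2 : I) :
  i1 != i2 -> a i1 = a i2 ->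
  #|isolate a i1 @: [set: I]| = #|a @: [set: I]|.+1.
Proof.
move=> neq_i12 eq_a12.
have -> : isolate a i1 @: [set: I] = None |: [set Some t | t in a @: [set: I]].
  apply/setP => o; rewrite !inE; apply/imsetP/orP => [[i _ ->]|].
    rewrite /isolate; case: (i == i1); first by left.
    by right; apply/imset_f/imset_f; rewrite inE.
  case=> [/eqP -> | /imsetP[_ /imsetP[i _ ->] ->]].
    by exists i1; rewrite ?inE /isolate ?eqxx.
  have [-> | neq_i] := eqVneq i i1.
    by exists i2; rewrite ?inE /isolate // eq_sym (negbTE neq_i12) eq_a12.
  by exists i; rewrite ?inE // /isolate (negbTE neq_i).
rewrite cardsU1 card_imset; last by move=> ? ? [].
by rewrite (_ : None \notin _) //; apply/imsetP => -[].
Qed.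

Lemma sum_partition (M : nmodType) (T : finType) (G : {set {set T}}) (F : T -> M) :
  finset.partition G [set: T] -> \sum_j F j = \sum_(S in G) \sum_(j in S) F j.
Proof.
case/and3P => /eqP coverG tiG _; rewrite -finset.big_trivIset // coverG.
by apply: eq_bigl => j; rewrite inE.
Qed.

Section KMeansCost.
Variables (R : realType) (d m : nat) (Y : 'I_m -> 'rV[R]_d).

Definition center_cost (T : Type) (a : 'I_m -> T) (c : T -> 'rV[R]_d) : R :=
  m%:R^-1 * \sum_j sqnorm (Y j - c (a j)).

Lemma kmeans_cost_ge0 G : 0 <= kmeans_cost Y G.
Proof.
rewrite mulr_ge0 ?invr_ge0 ?ler0n //.
by do 2!apply: sumr_ge0 => ? _; apply: sqnorm_ge0.
Qed.

Lemma kmeans_cost_pblock G : finset.partition G [set: 'I_m] ->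
  kmeans_cost Y G = center_cost (finset.pblock G) (centroid Y).
Proof.
move=> partG; have [_ tiG _] := and3P partG.
rewrite /center_cost (sum_partition _ partG); congr (_ * _).
by apply: eq_bigr => S SG; apply: eq_bigr => j jS; rewrite (finset.def_pblock tiG SG jS).
Qed.

Lemma kmeans_cost_preim_partition (T : finType) (a : 'I_m -> T) c :
  kmeans_cost Y (finset.preim_partition a [set: 'I_m]) <= center_cost a c.
Proof.
rewrite /center_cost (sum_partition _ (finset.preim_partitionP a [set: _])).
rewrite ler_wpM2l ?invr_ge0 ?ler0n //; apply: ler_sum => _ /imsetP[x _ ->].
rewrite [leRHS](eq_bigr (fun j => sqnorm (Y j - c (a x)))) ?centroid_min //.
by move=> j; rewrite !inE => /eqP ->.
Qed.

Lemma center_cost_isolate (T : Type) (a : 'I_m -> T) c j0 :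
  center_cost (isolate a j0) (oapp c (Y j0)) <= center_cost a c.
Proof.
rewrite ler_wpM2l ?invr_ge0 ?ler0n //; apply: ler_sum => j _.
rewrite /isolate; case: eqP => [-> /=|_ //].
by rewrite subrr [sqnorm 0]big1 ?sqnorm_ge0 // => i _; rewrite mxE expr0n.
Qed.

Lemma exists_kpartition_le_center_cost k (T : finType) (a : 'I_m -> T) c :
  (#|a @: [set: 'I_m]| <= k)%N -> (k <= m)%N ->
  exists2 G, @kpartitions m k G & kmeans_cost Y G <= center_cost a c.
Proof.
move=> + le_km; move Er : (k - #|a @: [set: 'I_m]|)%N => r.
elim: r T a c Er => [|r IH] T a c Er le_ak.
  exists (finset.preim_partition a [set: 'I_m]); last exact: kmeans_cost_preim_partition.
  split; first exact: finset.preim_partitionP.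
  by apply/eqP; rewrite card_preim_partition eqn_leq le_ak -subn_eq0 Er.
have [/existsP[j1 /existsP[j2 /andP[neq_j12 /eqP eq_a12]]] | inj_a] :=
  boolP [exists j1, exists j2, (j1 != j2) && (a j1 == a j2)]; last first.
  suff : #|a @: [set: 'I_m]| = m by lia.
  rewrite card_in_imset ?cardsT ?card_ord // => j1 j2 _ _ eq_a.
  apply/eqP; apply: contraNT inj_a => neq_j12.
  by apply/existsP; exists j1; apply/existsP; exists j2; rewrite neq_j12 eq_a /=.
have card_isolate := card_imset_isolate neq_j12 eq_a12.
have Er' : (k - #|isolate a j1 @: [set: 'I_m]|)%N = r by rewrite card_isolate subnS Er.
have le_a'k : (#|isolate a j1 @: [set: 'I_m]| <= k)%N by rewrite card_isolate -subn_gt0 Er.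
have [G kG le_G] := IH _ _ (oapp c (Y j1)) Er' le_a'k.
by exists G => //; apply: le_trans le_G (center_cost_isolate _ _ _).
Qed.

Lemma IP_le_kmeans_cost k G : @kpartitions m k G -> IP Y k <= kmeans_cost Y G.
Proof.
move=> kG; apply: ge_inf; last by exists G.
by exists 0 => _ [G' [_ ->]]; apply: kmeans_cost_ge0.
Qed.

Lemma IP_le_center_cost k (T : finType) (a : 'I_m -> T) c :
  (#|a @: [set: 'I_m]| <= k)%N -> (k <= m)%N -> IP Y k <= center_cost a c.
Proof.
move=> le_ak le_km; have [G kG le_G] := exists_kpartition_le_center_cost c le_ak le_km.
exact: le_trans (IP_le_kmeans_cost kG) le_G.
Qed.

Lemma lb_le_IP x k : (0 < k)%N -> (k <= m)%N ->
  (forall G, @kpartitions m k G -> x <= kmeans_cost Y G) -> x <= IP Y k.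
Proof.
move=> k_gt0 le_km x_le; apply: lb_le_inf; last by move=> _ [G [kG ->]]; apply: x_le.
have le_1k : (#|(fun=> tt) @: [set: 'I_m]| <= k)%N.
  by apply: leq_trans (max_card _) _; rewrite card_unit.
have [G kG _] := exists_kpartition_le_center_cost (fun=> 0) le_1k le_km.
by exists (kmeans_cost Y G), G.
Qed.

Lemma pw_objective_ge0 (Z : 'M[R]_m) : (forall i j, 0 <= Z i j) ->
  0 <= (2 * m%:R)^-1 * \tr (distmx Y *m Z).
Proof.
move=> Z_ge0; rewrite mulr_ge0 ?invr_ge0 ?mulr_ge0 ?ler0n //.
apply: sumr_ge0 => i _; rewrite mxE; apply: sumr_ge0 => j _.
by rewrite mxE mulr_ge0 ?sqnorm_ge0.
Qed.

Lemma SDP_le_kmeans_cost k G : @kpartitions m k G -> SDP Y k <= kmeans_cost Y G.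
Proof.
case=> partG <-; rewrite -(partition_mx_objective Y partG); apply: ge_inf.
  by exists 0 => _ [Z [[_ _ Z_ge0 _] ->]]; apply: pw_objective_ge0.
by exists (partition_mx R G); split=> //; apply: partition_mx_feasible.
Qed.

Lemma SDP_le_IP k : (0 < k)%N -> (k <= m)%N -> SDP Y k <= IP Y k.
Proof.
by move=> k_gt0 le_km; apply: lb_le_IP => // G; apply: SDP_le_kmeans_cost.
Qed.

End KMeansCost.

Definition shift_invariant (I : finType) (V : finZmodType) (P : pred {ffun I -> V}) :=
  forall t (f : {ffun I -> V}), P [ffun i => f i + t] = P f.

Lemma sum_marginal (I : finType) (V : finZmodType) (P : pred {ffun I -> V})
    (M : nmodType) (g : V -> M) i :
  shift_invariant P -> (\sum_(f | P f) g (f i)) *+ #|V| = (\sum_v g v) *+ #|P|.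
Proof.
move=> P_shift.
have shift_sum t : \sum_(f | P f) g (f i) = \sum_(f | P f) g (f i + t).
  have shift_inj : injective (fun f : {ffun I -> V} => [ffun i => f i + t]).
    by move=> f1 f2 /ffunP eq_f; apply/ffunP => x; move: (eq_f x); rewrite !ffunE => /addIr.
  by rewrite (reindex_inj shift_inj); apply: eq_big => f; rewrite ?P_shift ?ffunE.
rewrite -sumr_const (eq_bigr _ (fun t _ => shift_sum t)) exchange_big /=.
rewrite -sumr_const; apply: eq_big => // f _.
by rewrite [RHS](reindex_inj (addrI (f i))); apply: eq_bigl.
Qed.

Definition sample_mean (R : numFieldType) (T : finType) (P : pred T) (F : T -> R) : R :=
  #|P|%:R^-1 * \sum_(f | P f) F f.

Lemma sample_mean_le (R : numFieldType) (T : finType) (P : pred T) (F1 F2 : T -> R) :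
  (forall f, P f -> F1 f <= F2 f) -> sample_mean P F1 <= sample_mean P F2.
Proof. by move=> le_F; rewrite ler_wpM2l ?invr_ge0 ?ler0n //; apply: ler_sum. Qed.

Lemma sample_mean_center_cost (R : realType) d n s (P : pred {ffun 'I_s -> 'I_n.+1})
    (X : 'I_n.+1 -> 'rV[R]_d) (T : Type) (a : 'I_n.+1 -> T) c :
  shift_invariant P -> (0 < #|P|)%N -> (0 < s)%N ->
  sample_mean P (fun f => center_cost (subsample X f) (fun j => a (f j)) c) =
  center_cost X a c.
Proof.
move=> P_shift P_gt0 s_gt0; pose g i := sqnorm (X i - c (a i)).
have n_neq0 : n.+1%:R != 0 :> R by rewrite pnatr_eq0.
have marginal j : \sum_(f | P f) g (f j) = #|P|%:R * (\sum_i g i) / n.+1%:R.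
  apply: (mulIf n_neq0); rewrite mulfVK // mulr_natr mulr_natl.
  by have := sum_marginal g j P_shift; rewrite card_ord.
rewrite /sample_mean /center_cost -mulr_sumr exchange_big /= (eq_bigr _ (fun j _ => marginal j)).
rewrite sumr_const card_ord -mulr_natr /g; field.
by rewrite nat1r n_neq0 !pnatr_eq0 -!lt0n P_gt0 s_gt0.
Qed.

Lemma sample_mean_bounds (R : realType) d n k s (X : 'I_n.+1 -> 'rV[R]_d)
    (P : pred {ffun 'I_s -> 'I_n.+1}) :
  shift_invariant P -> (0 < #|P|)%N -> (0 < k)%N -> (k <= s)%N -> (k <= n.+1)%N ->
  sample_mean P (fun f => SDP (subsample X f) k) <= sample_mean P (fun f => IP (subsample X f) k)
  /\ sample_mean P (fun f => IP (subsample X f) k) <= IP X k.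
Proof.
move=> P_shift P_gt0 k_gt0 le_ks le_kn; split.
  by apply: sample_mean_le => f _; apply: SDP_le_IP.
apply: lb_le_IP => // G [partG cardG].
rewrite (kmeans_cost_pblock X partG) -(sample_mean_center_cost _ _ _ P_shift) //;
  last exact: leq_trans le_ks.
apply: sample_mean_le => f _; apply: IP_le_center_cost => //.
rewrite -cardG; apply/subset_leq_card/fintype.subsetP => _ /imsetP[j _ ->].
by apply: finset.pblock_mem; rewrite (finset.cover_partition partG) inE.
Qed.

Lemma shift_invariant_injectiveb (I : finType) (V : finZmodType) :
  shift_invariant (fun f : {ffun I -> V} => injectiveb f).
Proof.
move=> t f; apply/injectiveP/injectiveP => inj_f i j.
  by move=> eq_f; apply: inj_f; rewrite !ffunE eq_f.
by rewrite !ffunE => /addIr; apply: inj_f.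
Qed.

Unset Implicit Arguments.
Set Strict Implicit.

Theorem lemma3 (R : realType) (d n k s : nat) (X : 'I_n -> 'rV[R]_d) :
  (2 <= k)%N -> (k <= s)%N -> (k <= n)%N ->
  (* sampling with replacement *)
  (E_with n s (fun f => SDP (subsample X f) k) <= E_with n s (fun f => IP (subsample X f) k)
   /\ E_with n s (fun f => IP (subsample X f) k) <= IP X k)
  /\
  (* sampling without replacement, s <= n *)
  ((s <= n)%N ->
   E_without n s (fun f => SDP (subsample X f) k) <= E_without n s (fun f => IP (subsample X f) k)
   /\ E_without n s (fun f => IP (subsample X f) k) <= IP X k).
Proof.
move=> le_2k le_ks le_kn; have k_gt0 : (0 < k)%N := ltnW le_2k.
case: n X le_kn => [|n] X le_kn; first by move: (leq_trans le_2k le_kn).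
split=> [|le_sn].
  apply: (sample_mean_bounds X (P := predT)) => //.
  by apply/card_gt0P; exists [ffun=> ord0].
rewrite /E_without cardsE.
apply: (sample_mean_bounds X (P := fun f => injectiveb f)) => //.
  exact: shift_invariant_injectiveb.
apply/card_gt0P; exists [ffun j => widen_ord le_sn j]; rewrite unfold_in.
by apply/injectiveP => i j; rewrite !ffunE => /(congr1 val) /= /val_inj.
Qed.
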